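(* A map in $p\mathsf{Ch}^*_\mathbb{Q}$ has the right lifting property with respect to all maps in $\mathbb{I}$ if and only if it has the right lifting property with respect to all maps in $\mathbb{J}$ and belongs to $\mathbb{W}$.
   Context: $p\mathsf{Ch}^*_\mathbb{Q}=\mathsf{Fun}([0,\infty),\mathsf{Ch}^*_\mathbb{Q})$, non-negatively graded rational cochain complexes. $S^k=\mathbb{Q}$ in degree $k$; $D^k$ ($k\ge1$) is $\mathbb{Q}$ in degrees $k-1,k$ with identity differential; $D^0=0$. For $0\le s<t<\infty$, $\mathbb{S}^k_{[s,t)}$ is $0$ at $r<s$, $S^k$ at $s\le r<t$, $D^k$ at $r\ge t$; $\mathbb{S}^k_{[s,\infty)}$ is $0$ at $r<s$, $S^k$ at $r\ge s$; $\mathbb{D}^k_s$ is $0$ at $r<s$, $D^k$ at $r\ge s$. $\mathbb{I}=\{\mathbb{S}^k_{[s,t)}\to\mathbb{D}^k_s: k\in\mathbb{N},\ 0\le s<t\le\infty\}$, $\mathbb{J}=\{\mathbb{D}^k_t\to\mathbb{D}^k_s: 0\le s<t<\infty\}\cup\{0\to\mathbb{D}^k_s: 0\le s<\infty\}$. $\mathbb{W}$ is the class of maps that are quasi-isomorphisms at each $r\in[0,\infty)$. *)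

From Stdlib Require Import Reals.
From HB Require Import structures.
From mathcomp Require Import all_boot all_order all_algebra.
Set Implicit Arguments. Unset Strict Implicit. Unset Printing Implicit Defensive.
Import GRing.Theory.
Local Open Scope ring_scope.

Definition nnR := {r : R | Rle 0 r}.
Definition nnv (r : nnR) : R := proj1_sig r.

Definition lin (U V : lmodType rat) (f : U -> V) : Prop :=
  forall (a : rat) (x y : U), f (a *: x + y) = a *: f x + f y.

(** Data of a persistence (non-negatively graded, cohomological) cochain
    complex of Q-vector spaces: at each r >= 0 and degree n a Q-vector space,
    differentials d : C_r^n -> C_r^{n+1}, and structure maps C_r -> C_r'
    (only meaningful for r <= r'). *)
Record pcc : Type := PCC {
  obj : nnR -> nat -> lmodType rat;
  dif : forall r n, obj r n -> obj r n.+1;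
  tr  : forall r r' n, obj r n -> obj r' n }.

Definition is_pcc (X : pcc) : Prop :=
  [/\ (forall r n, lin (@dif X r n)),
      (forall r n x, dif (dif x) = 0 :> obj X r n.+2),
      (forall r r' n, Rle (nnv r) (nnv r') -> lin (@tr X r r' n)) /\
      (forall r r' n (x : obj X r n), Rle (nnv r) (nnv r') ->
          tr r' (dif x) = dif (tr r' x)) /\
      (forall r n (x : obj X r n), tr r x = x)
    & (forall r r' r'' n (x : obj X r n), Rle (nnv r) (nnv r') ->
          Rle (nnv r') (nnv r'') -> tr r'' (tr r' x) = tr r'' x)].

Definition pchmap (X Y : pcc) : Type := forall r n, obj X r n -> obj Y r n.

Definition is_pmap (X Y : pcc) (f : pchmap X Y) : Prop :=
  [/\ (forall r n, lin (f r n)),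
      (forall r n (x : obj X r n), f r n.+1 (dif x) = dif (f r n x))
    & (forall r r' n (x : obj X r n), Rle (nnv r) (nnv r') ->
          f r' n (tr r' x) = tr r' (f r n x))].

Definition RLP (A B : pcc) (i : pchmap A B) (X Y : pcc) (p : pchmap X Y) : Prop :=
  forall (u : pchmap A X) (v : pchmap B Y),
    is_pmap u -> is_pmap v ->
    (forall r n (a : obj A r n), p r n (u r n a) = v r n (i r n a)) ->
    exists h : pchmap B X,
      [/\ is_pmap h,
          (forall r n (a : obj A r n), h r n (i r n a) = u r n a)
        & (forall r n (b : obj B r n), p r n (h r n b) = v r n b)].

Definition cobd (X : pcc) (r : nnR) (n : nat) : obj X r n -> Prop :=
  match n as m return obj X r m -> Prop with
  | 0 => fun x => x = 0
  | m.+1 => fun x => exists y : obj X r m, dif y = x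
  end.

(** f_r induces a bijection H^n(X_r) -> H^n(Y_r) for all n (quasi-iso). *)
Definition quasi_iso_at (X Y : pcc) (f : pchmap X Y) (r : nnR) : Prop :=
  forall n,
    (forall x : obj X r n, dif x = 0 -> cobd (f r n x) -> cobd x) /\
    (forall y : obj Y r n, dif y = 0 ->
        exists x : obj X r n, dif x = 0 /\ cobd (y - f r n x)).

Definition inW (X Y : pcc) (f : pchmap X Y) : Prop := forall r, quasi_iso_at f r.

(** Elementary persistence complexes: each space is Q^{dim r n} with
    dim r n <= 1; the differential at degree n is the matrix with entries
    [n+1 = k] (this is the identity Q -> Q from degree k-1 to k of D^k,
    and zero otherwise); all structure maps are "identity where possible",
    i.e. the all-ones matrix (between spaces of dimension <= 1). *)
Definition elem (dim : R -> nat -> nat) (k : nat) : pcc :=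
  @PCC (fun r n => ('rV[rat]_(dim (nnv r) n) : lmodType rat))
    (fun r n x => x *m \matrix_(i < dim (nnv r) n, j < dim (nnv r) n.+1)
                          ((n.+1 == k)%:R : rat))
    (fun r r' n x => x *m const_mx (1 : rat)).

Definition ones_map (dA dB : R -> nat -> nat) (kA kB : nat)
  : pchmap (elem dA kA) (elem dB kB) :=
  fun r n x => x *m const_mx (1 : rat).

(** dimensions of the disk D^k : Q in degrees k-1, k (k >= 1); D^0 = 0. *)
Definition dimD (k n : nat) : nat :=
  if k is 0 then 0 else ((n.+1 == k) || (n == k) : nat).

(** extended endpoint t in (0, oo]: None = oo *)
Definition before (r : R) (t : option R) : bool :=
  match t with None => true | Some t => if Rlt_dec r t then true else false end.

(** S^k_[s,t) : 0 for r < s, S^k for s <= r < t, D^k for r >= t. *)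
Definition dimS (k : nat) (s : R) (t : option R) (r : R) (n : nat) : nat :=
  if Rlt_dec r s then 0 else if before r t then (n == k : nat) else dimD k n.

(** D^k_s : 0 for r < s, D^k for r >= s. *)
Definition dimDs (k : nat) (s : R) (r : R) (n : nat) : nat :=
  if Rlt_dec r s then 0 else dimD k n.

Definition dim0 (r : R) (n : nat) : nat := 0.

Definition Sph (k : nat) (s : R) (t : option R) : pcc := elem (dimS k s t) k.
Definition Dsk (k : nat) (s : R) : pcc := elem (dimDs k s) k.
Definition Zero : pcc := elem dim0 0.

Definition Imap (k : nat) (s : R) (t : option R) : pchmap (Sph k s t) (Dsk k s) :=
  @ones_map (dimS k s t) (dimDs k s) k k.
Definition Jmap (k : nat) (s t : R) : pchmap (Dsk k t) (Dsk k s) :=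
  @ones_map (dimDs k t) (dimDs k s) k k.
Definition Jmap0 (k : nat) (s : R) : pchmap Zero (Dsk k s) :=
  @ones_map dim0 (dimDs k s) 0 k.

Arguments Sph : clear implicits.
Arguments Dsk : clear implicits.
Arguments Imap : clear implicits.
Arguments Jmap : clear implicits.
Arguments Jmap0 : clear implicits.

Definition ltb_ext (s : R) (t : option R) : Prop :=
  match t with None => True | Some t => Rlt s t end.

Definition RLP_I (X Y : pcc) (p : pchmap X Y) : Prop :=
  forall (k : nat) (s : R) (t : option R),
    Rle 0 s -> ltb_ext s t -> RLP (Imap k s t) p.

Definition RLP_J (X Y : pcc) (p : pchmap X Y) : Prop :=
  (forall (k : nat) (s t : R), Rle 0 s -> Rlt s t -> RLP (Jmap k s t) p) /\
  (forall (k : nat) (s : R), Rle 0 s -> RLP (Jmap0 k s) p).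

(* A chain map out of an elementary complex, all of whose spaces have dimension
   at most one, amounts to the family of images of its generators.  So a map
   D^{m+1}_s -> X is an element x of X_s^m, and a map S^{m+1}_[s,t) -> X is a
   cocycle a of X_s^{m+1} together with, for finite t, an element z of X_t^m
   with dz = a|_t.  Consequently the RLP against 0 -> D^{m+1}_s is surjectivity
   of p_s in degree m, the RLP against D^{m+1}_t -> D^{m+1}_s is surjectivity
   of X_s -> X_t x_{Y_t} Y_s, and the RLP against S^{m+1}_[s,t) -> D^{m+1}_s is a
   relative lifting property for cocycles.

   Lifting cocycles with t = oo yields surjectivity of p and bijectivity on
   cohomology, and with t finite the relative surjectivity; this gives RLP(J)
   and W.  Conversely, surjectivity and quasi-isomorphism make ker p levelwise
   acyclic, and relative surjectivity lets the contracting cochains be chosen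
   compatibly with restriction to t, which is what the cocycle lifting needs. *)

From Stdlib Require Import Reals Lra Eqdep_dec.
From mathcomp Require Import all_boot all_order all_algebra.
From mathcomp Require Import zify.
Set Implicit Arguments. Unset Strict Implicit. Unset Printing Implicit Defensive.
Import GRing.Theory.
Local Open Scope ring_scope.

Section Linear.
Variables (U V : lmodType rat) (f : U -> V).
Hypothesis f_lin : lin f.

Lemma lin0 : f 0 = 0.
Proof.
have := f_lin 1 0 0; rewrite scaler0 addr0 scale1r.
by rewrite -{1}[f 0]addr0 => /addrI.
Qed.

Lemma linZ a x : f (a *: x) = a *: f x.
Proof. by have := f_lin a x 0; rewrite !addr0 lin0 addr0. Qed.

Lemma linB x y : f (x - y) = f x - f y.
Proof. by have := f_lin (-1) y x; rewrite !scaleN1r addrC [- _ + _]addrC. Qed.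

Lemma lin_comp (W : lmodType rat) (g : V -> W) : lin f -> lin g -> lin (g \o f).
Proof. by move=> lf lg a x y; rewrite /= lf lg. Qed.

End Linear.

(* Implicit arguments are fixed by hand in the following sections: under
   [Set Implicit Arguments] the indices [r n] of a [pchmap] variable, or of a
   hypothesis such as [RLP_I p], would become implicit. *)
Section Complex.
Local Unset Implicit Arguments.
Context {X : pcc}.
Hypothesis HX : is_pcc X.

Lemma dif_lin r n : lin (@dif X r n). Proof. by case: HX => H. Qed.
Lemma dif_dif {r n} (x : obj X r n) : dif (dif x) = 0. Proof. by case: HX => _ H. Qed.
Lemma tr_lin r r' n : Rle (nnv r) (nnv r') -> lin (@tr X r r' n).
Proof. by case: HX => _ _ [H _] _; apply: H. Qed.
Lemma tr_dif {r r' n} (x : obj X r n) : Rle (nnv r) (nnv r') -> tr r' (dif x) = dif (tr r' x).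
Proof. by case: HX => _ _ [_ [H _]] _; apply: H. Qed.
Lemma tr_id {r n} (x : obj X r n) : tr r x = x. Proof. by case: HX => _ _ [_ [_ H]] _; apply: H. Qed.
Lemma tr_tr {r r' r'' n} (x : obj X r n) : Rle (nnv r) (nnv r') -> Rle (nnv r') (nnv r'') ->
  tr r'' (tr r' x) = tr r'' x.
Proof. by case: HX => _ _ _; apply. Qed.

Lemma dif0 {r n} : dif (0 : obj X r n) = 0. Proof. by rewrite (lin0 (dif_lin r n)). Qed.
Lemma difB {r n} (x y : obj X r n) : dif (x - y) = dif x - dif y.
Proof. by rewrite (linB (dif_lin r n)). Qed.
Lemma tr0 {r r' n} : Rle (nnv r) (nnv r') -> tr r' (0 : obj X r n) = 0.
Proof. by move=> le; rewrite (lin0 (tr_lin r r' n le)). Qed.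
Lemma trB {r r' n} (x y : obj X r n) : Rle (nnv r) (nnv r') -> tr r' (x - y) = tr r' x - tr r' y.
Proof. by move=> le; rewrite (linB (tr_lin r r' n le)). Qed.

Lemma cobd0 {r n} : cobd (0 : obj X r n).
Proof. by case: n => [|n] //=; exists 0; exact: dif0. Qed.

Lemma cobd_cocycle {r n} {x : obj X r n} : cobd x -> dif x = 0.
Proof. by case: n x => [|n] x /= => [->|[y <-]]; rewrite ?dif0 ?dif_dif. Qed.

End Complex.

Section ChainMap.
Local Unset Implicit Arguments.
Context {X Y : pcc} {p : pchmap X Y}.
Hypothesis Hp : is_pmap p.

Lemma pmap_lin r n : lin (p r n). Proof. by case: Hp. Qed.
Lemma pmap_dif {r n} (x : obj X r n) : p r n.+1 (dif x) = dif (p r n x). Proof. by case: Hp. Qed.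
Lemma pmap_tr {r r' n} (x : obj X r n) : Rle (nnv r) (nnv r') -> p r' n (tr r' x) = tr r' (p r n x).
Proof. by case: Hp => _ _; apply. Qed.
Lemma pmap0 {r n} : p r n 0 = 0. Proof. by rewrite (lin0 (pmap_lin r n)). Qed.
Lemma pmapB {r n} (x y : obj X r n) : p r n (x - y) = p r n x - p r n y.
Proof. by rewrite (linB (pmap_lin r n)). Qed.

End ChainMap.

Definition rsum m (v : 'rV[rat]_m) : rat := \sum_(j < m) v 0 j.

Lemma rsumDZ m a (v w : 'rV[rat]_m) : rsum (a *: v + w) = a * rsum v + rsum w.
Proof. by rewrite /rsum mulr_sumr -big_split; apply: eq_bigr => j _; rewrite !mxE. Qed.

Lemma rsum_mul_const a b (v : 'rV[rat]_a) (M : 'M_(a, b)) c :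
  (forall i j, M i j = c) -> rsum (v *m M) = rsum v * c * b%:R.
Proof.
move=> Mc; have Ej j : (v *m M) 0 j = rsum v * c.
  by rewrite !mxE /rsum mulr_suml; apply: eq_bigr => i _; rewrite Mc.
by rewrite /rsum (eq_bigr _ (fun j _ => Ej j)) sumr_const card_ord mulr_natr.
Qed.

Lemma rsum_const1 m : rsum (const_mx 1 : 'rV[rat]_m) = m%:R.
Proof. by rewrite /rsum; under eq_bigr => j _ do rewrite mxE; rewrite sumr_const card_ord. Qed.

Lemma rsum_dim0 m (v : 'rV[rat]_m) : m = 0%N -> rsum v = 0.
Proof. by move=> e; move: v; rewrite /rsum e => v; rewrite big_ord0. Qed.

Lemma row_le1E m (v : 'rV[rat]_m) : (m <= 1)%N -> v = rsum v *: const_mx 1.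
Proof.
case: m v => [|[|m]] v // _; apply/matrixP => i j.
- by case: j.
- by rewrite !mxE /rsum big_ord1 mulr1 !ord1.
Qed.

(** * Maps out of elementary complexes *)

Definition family (X : pcc) := forall r n, obj X r n.

Definition dimle1 (d : R -> nat -> nat) := forall r n, (d r n <= 1)%N.

Lemma dimle1_cases d r n : dimle1 d -> d r n = 0%N \/ d r n = 1%N.
Proof. by move=> h; move: (h r n); case: (d r n) => [|[|m]]; auto. Qed.

(* [g r n] is the image of the generator of the space of [elem d k] at time [r]
   and degree [n]. *)
Definition elem_family (X : pcc) (d : R -> nat -> nat) (k : nat) (g : family X) :=
  [/\ forall r n, d (nnv r) n = 0%N -> g r n = 0,
      forall r n, d (nnv r) n = 1%N -> dif (g r n) = (n.+1 == k)%:R *: g r n.+1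
    & forall r r' n, Rle (nnv r) (nnv r') -> d (nnv r) n = 1%N -> tr r' (g r n) = g r' n].

Lemma elem_familyZ X d k (g : family X) :
  dimle1 d -> elem_family d k g -> forall r n, (d (nnv r) n)%:R *: g r n = g r n.
Proof.
move=> hd [g0 _ _] r n; case: (dimle1_cases (nnv r) n hd) => e; last by rewrite e scale1r.
by rewrite e g0 ?scale0r.
Qed.

Lemma elem_family0 (X : pcc) d k : (forall r n, d r n = 0%N) ->
  elem_family d k (fun r n => 0 : obj X r n).
Proof. by move=> d0; split=> [//|r n|r r' n _]; rewrite d0. Qed.

Section ElementaryMaps.
Variables (X : pcc) (d : R -> nat -> nat) (k : nat).
Hypothesis d_le1 : dimle1 d.

Definition elem_map (g : family X) : pchmap (elem d k) X := fun r n v => rsum v *: g r n.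
Arguments elem_map g r n v : clear implicits.

Definition elem_gen (f : pchmap (elem d k) X) : family X := fun r n => f r n (const_mx 1).

Lemma elem_map1 g r n : elem_map g r n (const_mx 1) = (d (nnv r) n)%:R *: g r n.
Proof. by rewrite /elem_map rsum_const1. Qed.

Lemma elem_mapE (f : pchmap (elem d k) X) :
  (forall r n, lin (f r n)) -> forall r n v, f r n v = rsum v *: elem_gen f r n.
Proof. by move=> lf r n v; rewrite {1}(row_le1E v (d_le1 _ _)) (linZ (lf r n)). Qed.

Lemma elem_map_ext (f f' : pchmap (elem d k) X) :
  (forall r n, lin (f r n)) -> (forall r n, lin (f' r n)) ->
  (forall r n, d (nnv r) n = 1%N -> f r n (const_mx 1) = f' r n (const_mx 1)) ->
  forall r n v, f r n v = f' r n v.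
Proof.
move=> lf lf' E r n v; rewrite (elem_mapE lf) (elem_mapE lf') /elem_gen.
by case: (dimle1_cases (nnv r) n d_le1) => e; [rewrite (rsum_dim0 v e) !scale0r | rewrite E].
Qed.

Lemma elem_gen_family f : is_pmap f -> elem_family d k (elem_gen f).
Proof.
move=> Hf; have fE := elem_mapE (pmap_lin Hf).
have genZ r n : (d (nnv r) n)%:R *: elem_gen f r n = elem_gen f r n.
  by rewrite -rsum_const1 -fE.
split.
- by move=> r n e; rewrite -genZ e scale0r.
- move=> r n e; rewrite /elem_gen -(pmap_dif Hf) fE /=.
  by rewrite (rsum_mul_const _ (fun i j => mxE _ _ _ _)) rsum_const1 e mul1r -scalerA genZ.
- move=> r r' n le e; rewrite /elem_gen -(pmap_tr Hf _ le) fE /=.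
  by rewrite (rsum_mul_const _ (fun i j => mxE _ _ _ _)) rsum_const1 e !mul1r genZ.
Qed.

Hypothesis HX : is_pcc X.

Lemma elem_map_pmap g : elem_family d k g -> is_pmap (elem_map g).
Proof.
move=> Fg; have [g0 gd gt] := Fg; split.
- by move=> r n a x y; rewrite /elem_map rsumDZ scalerDl scalerA.
- move=> r n x; rewrite /elem_map /= (linZ (dif_lin HX r n)).
  rewrite (rsum_mul_const _ (fun i j => mxE _ _ _ _)).
  case: (dimle1_cases (nnv r) n d_le1) => e; first by rewrite (rsum_dim0 x e) !mul0r !scale0r.
  by rewrite gd // -!scalerA (elem_familyZ d_le1 Fg).
- move=> r r' n x le; rewrite /elem_map /= (linZ (tr_lin HX r r' n le)).
  rewrite (rsum_mul_const _ (fun i j => mxE _ _ _ _)) mulr1.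
  case: (dimle1_cases (nnv r) n d_le1) => e; first by rewrite (rsum_dim0 x e) !mul0r !scale0r.
  by rewrite gt // -scalerA (elem_familyZ d_le1 Fg).
Qed.

End ElementaryMaps.
Arguments elem_map {X} d k g r n v.

Lemma ones_map1 dA dB kA kB r n :
  @ones_map dA dB kA kB r n (const_mx 1) = const_mx (dA (nnv r) n)%:R.
Proof.
apply/matrixP => i j; rewrite !mxE.
by under eq_bigr do rewrite !mxE mulr1; rewrite sumr_const card_ord.
Qed.

Lemma ones_map_lin dA dB kA kB r n : lin (@ones_map dA dB kA kB r n).
Proof. by move=> a x y; rewrite /ones_map mulmxDl scalemxAl. Qed.

(** * Disks and spheres *)

Lemma ifRlt_lt (A : Type) r s (a b : A) : Rlt r s -> (if Rlt_dec r s then a else b) = a.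
Proof. by case: Rlt_dec. Qed.

Lemma ifRlt_ge (A : Type) r s (a b : A) : Rle s r -> (if Rlt_dec r s then a else b) = b.
Proof. by case: Rlt_dec => // lt le; lra. Qed.

Lemma dimD_m m : dimD m.+1 m = 1%N.
Proof. by rewrite /dimD eqxx. Qed.

Lemma dimD_m1 m : dimD m.+1 m.+1 = 1%N.
Proof. by rewrite /dimD eqxx orbT. Qed.

Lemma dimD1P m n : dimD m.+1 n = 1%N -> n = m \/ n = m.+1.
Proof.
rewrite /dimD eqSS; have [->|_] := eqVneq n m; first by left.
by have [->|_] := eqVneq n m.+1; [right|].
Qed.

Lemma dimD_other m n : n <> m -> n <> m.+1 -> dimD m.+1 n = 0%N.
Proof. by move=> nm nm1; rewrite /dimD eqSS; do 2 case: eqP => // _. Qed.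

Lemma dimD_le1 k n : (dimD k n <= 1)%N.
Proof. by case: k => [|k] //=; case: (_ || _). Qed.

Lemma dimDs_lt k s r n : Rlt r s -> dimDs k s r n = 0%N.
Proof. exact: ifRlt_lt. Qed.

Lemma dimDs_ge k s r n : Rle s r -> dimDs k s r n = dimD k n.
Proof. exact: ifRlt_ge. Qed.

Lemma dimDs_m m s r : Rle s r -> dimDs m.+1 s r m = 1%N.
Proof. by move=> le; rewrite dimDs_ge ?dimD_m. Qed.

Lemma dimDs_le1 k s : dimle1 (dimDs k s).
Proof. by move=> r n; rewrite /dimDs; case: Rlt_dec => ? //; exact: dimD_le1. Qed.

Lemma dimDs0 s r n : dimDs 0 s r n = 0%N.
Proof. by rewrite /dimDs; case: (Rlt_dec r s). Qed.

Lemma dimDs1P m s r n : dimDs m.+1 s r n = 1%N -> Rle s r /\ (n = m \/ n = m.+1).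
Proof.
have [lt|le] := Rlt_or_le r s; first by rewrite dimDs_lt.
by rewrite dimDs_ge // => /dimD1P.
Qed.

Definition castn (X : pcc) r m n (x : obj X r m) : obj X r n :=
  match Nat.eq_dec m n with left e => eq_rect m (obj X r) x n e | right _ => 0 end.

Lemma castnn (X : pcc) r m (x : obj X r m) : castn m x = x.
Proof. by rewrite /castn; case: Nat.eq_dec => // e; rewrite (UIP_refl_nat _ e). Qed.

Lemma castn_neq (X : pcc) r m n (x : obj X r m) : m != n -> castn n x = 0.
Proof. by move=> mn; rewrite /castn; case: Nat.eq_dec => // e; rewrite e eqxx in mn. Qed.

Section Disks.
Variables (X : pcc) (m : nat) (s : nnR).
Hypothesis HX : is_pcc X.

(* The generators of the map [D^{m+1}_s -> X] classifying [x]. *)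
Definition disk_gen (x : obj X s m) : family X := fun r n =>
  if Rlt_dec (nnv r) (nnv s) then 0 else castn n (tr r x) + castn n (tr r (dif x)).

Lemma disk_gen_lt x r n : Rlt (nnv r) (nnv s) -> disk_gen x r n = 0.
Proof. exact: ifRlt_lt. Qed.

Lemma disk_gen_m x r : Rle (nnv s) (nnv r) -> disk_gen x r m = tr r x.
Proof. by move=> le; rewrite /disk_gen ifRlt_ge // castnn castn_neq ?addr0 //; lia. Qed.

Lemma disk_gen_m1 x r : Rle (nnv s) (nnv r) -> disk_gen x r m.+1 = tr r (dif x).
Proof. by move=> le; rewrite /disk_gen ifRlt_ge // castnn castn_neq ?add0r //; lia. Qed.

Lemma disk_gen_other x r n : n <> m -> n <> m.+1 -> disk_gen x r n = 0.
Proof.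
move=> nm nm1; have [lt|le] := Rlt_or_le (nnv r) (nnv s); first exact: disk_gen_lt.
by rewrite /disk_gen ifRlt_ge // !castn_neq ?addr0 //; apply/eqP => /esym.
Qed.

Lemma disk_gen_family x : elem_family (dimDs m.+1 (nnv s)) m.+1 (disk_gen x).
Proof.
split.
- move=> r n; have [lt|le] := Rlt_or_le (nnv r) (nnv s); first by rewrite disk_gen_lt.
  rewrite dimDs_ge //; have [->|nm] := eqVneq n m; first by rewrite dimD_m.
  have [->|nm1] := eqVneq n m.+1; first by rewrite dimD_m1.
  by move=> _; rewrite disk_gen_other //; apply/eqP.
- move=> r n /dimDs1P [le [->|->]].
    by rewrite disk_gen_m // disk_gen_m1 // eqxx scale1r (tr_dif HX).
  by rewrite disk_gen_m1 // -(tr_dif HX) // (dif_dif HX) (tr0 HX) // eqSS gtn_eqF // scale0r.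
- move=> r r' n le /dimDs1P [le' [->|->]].
    by rewrite !disk_gen_m ?(tr_tr HX) //; lra.
  by rewrite !disk_gen_m1 ?(tr_tr HX) //; lra.
Qed.

Lemma disk_gen_eq (g : family X) x r : Rle (nnv s) (nnv r) ->
  g r m = tr r x -> g r m.+1 = dif (g r m) -> (forall n, n <> m -> n <> m.+1 -> g r n = 0) ->
  forall n, g r n = disk_gen x r n.
Proof.
move=> le gm gm1 g0 n.
have [->|nm] := eqVneq n m; first by rewrite disk_gen_m.
have [->|nm1] := eqVneq n m.+1; first by rewrite disk_gen_m1 // gm1 gm (tr_dif HX).
by rewrite disk_gen_other ?g0 //; apply/eqP.
Qed.

Lemma disk_genE (g : family X) : elem_family (dimDs m.+1 (nnv s)) m.+1 g ->
  forall r n, g r n = disk_gen (g s m) r n.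
Proof.
move=> [g0 gd gt] r n.
have [lt|le] := Rlt_or_le (nnv r) (nnv s); first by rewrite disk_gen_lt // g0 // dimDs_lt.
apply: disk_gen_eq => //.
- by rewrite gt ?dimDs_m //; lra.
- by rewrite gd ?dimDs_m // eqxx scale1r.
- by move=> k km km1; rewrite g0 // dimDs_ge // dimD_other.
Qed.

End Disks.

Lemma disk_gen_tr (X : pcc) m (s t r : nnR) : is_pcc X ->
  Rle (nnv s) (nnv t) -> Rle (nnv t) (nnv r) ->
  forall (x : obj X s m) n, disk_gen (tr t x) r n = disk_gen x r n.
Proof.
move=> HX st tr_ x; apply: (disk_gen_eq HX).
- lra.
- by rewrite disk_gen_m ?(tr_tr HX) //; lra.
- by rewrite disk_gen_m1 ?disk_gen_m -?(tr_dif HX) //; lra.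
- exact: disk_gen_other.
Qed.

Lemma before_start s t : ltb_ext s t -> before s t = true.
Proof. by case: t => [t|] //= st; rewrite ifRlt_lt. Qed.

Lemma before_mono r r' t : Rle r r' -> before r t = false -> before r' t = false.
Proof.
case: t => [t|] //= le; have [lt|ge] := Rlt_or_le r t; first by rewrite ifRlt_lt.
by rewrite !ifRlt_ge //; lra.
Qed.

(* [t0] is the finite endpoint [t] as a point of [nnR]. *)
Definition is_endpoint (s : nnR) (t : option R) (t0 : nnR) :=
  forall tt, t = Some tt -> nnv t0 = tt /\ Rlt (nnv s) tt.

Lemma nnv_ge0 (r : nnR) : Rle 0 (nnv r).
Proof. by case: r. Qed.

Lemma endpoint_None s t0 : is_endpoint s None t0.
Proof. by []. Qed.

Lemma endpoint_Some (s t : nnR) : Rlt (nnv s) (nnv t) -> is_endpoint s (Some (nnv t)) t.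
Proof. by move=> st tt [<-]. Qed.

Lemma after_endpoint s t t0 r : is_endpoint s t t0 -> before (nnv r) t = false ->
  [/\ t <> None, Rle (nnv t0) (nnv r) & Rlt (nnv s) (nnv t0)].
Proof.
case: t => [tt|] // Ht /=; have [lt|le] := Rlt_or_le (nnv r) tt; first by rewrite ifRlt_lt.
by have [-> ?] := Ht tt erefl.
Qed.

Lemma endpoint_after s t t0 : is_endpoint s t t0 -> t <> None -> before (nnv t0) t = false.
Proof.
case: t => [tt|] // Ht _ /=; have [-> _] := Ht tt erefl.
by rewrite ifRlt_ge //; apply: Rle_refl.
Qed.

Lemma dimS_lt k s t r n : Rlt r s -> dimS k s t r n = 0%N.
Proof. exact: ifRlt_lt. Qed.

Lemma dimS_before k s t r n : Rle s r -> before r t -> dimS k s t r n = (n == k : nat).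
Proof. by move=> le bt; rewrite /dimS ifRlt_ge // bt. Qed.

Lemma dimS_after k s t r n : Rle s r -> before r t = false -> dimS k s t r n = dimD k n.
Proof. by move=> le bt; rewrite /dimS ifRlt_ge // bt. Qed.

Lemma dimS_le1 k s t : dimle1 (dimS k s t).
Proof.
move=> r n; have [lt|le] := Rlt_or_le r s; first by rewrite dimS_lt.
by case Eb: (before r t); [rewrite dimS_before //; case: (n == k) | rewrite dimS_after ?dimD_le1].
Qed.

Section Spheres.
Variables (X : pcc) (m : nat) (s : nnR) (t : option R) (t0 : nnR).
Hypotheses (HX : is_pcc X) (Hend : is_endpoint s t t0).

(* The generators of the map [S^{m+1}_[s,t) -> X] classifying [a] and, after
   [t], the bounding element [z]. *)
Definition sphere_gen (a : obj X s m.+1) (z : obj X t0 m) : family X := fun r n =>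
  if Rlt_dec (nnv r) (nnv s) then 0
  else if before (nnv r) t then castn n (tr r a) else disk_gen z r n.

Variables (a : obj X s m.+1) (z : obj X t0 m).

Lemma sphere_gen_lt r n : Rlt (nnv r) (nnv s) -> sphere_gen a z r n = 0.
Proof. exact: ifRlt_lt. Qed.

Lemma sphere_gen_before r : Rle (nnv s) (nnv r) -> before (nnv r) t ->
  sphere_gen a z r m.+1 = tr r a.
Proof. by move=> le bt; rewrite /sphere_gen ifRlt_ge // bt castnn. Qed.

Lemma sphere_gen_before_other r n : before (nnv r) t -> n != m.+1 -> sphere_gen a z r n = 0.
Proof.
move=> bt nm; have [lt|le] := Rlt_or_le (nnv r) (nnv s); first exact: sphere_gen_lt.
by rewrite /sphere_gen ifRlt_ge // bt castn_neq // eq_sym.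
Qed.

Lemma sphere_gen_after r n : before (nnv r) t = false -> sphere_gen a z r n = disk_gen z r n.
Proof.
move=> bt; have [_ le lt] := after_endpoint Hend bt.
by rewrite /sphere_gen ifRlt_ge ?bt //; lra.
Qed.

Lemma sphere_gen_family : dif a = 0 -> (t <> None -> dif z = tr t0 a) ->
  elem_family (dimS m.+1 (nnv s) t) m.+1 (sphere_gen a z).
Proof.
move=> Ha Hz; have [D0 D1 D2] := disk_gen_family HX z; split.
- move=> r n; have [lt|le] := Rlt_or_le (nnv r) (nnv s); first by rewrite sphere_gen_lt.
  case Eb: (before (nnv r) t).
    by rewrite dimS_before //; case: eqP => // /eqP nm _; rewrite sphere_gen_before_other.
  have [_ le0 _] := after_endpoint Hend Eb.
  by rewrite dimS_after // sphere_gen_after // => e; apply: D0; rewrite dimDs_ge.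
- move=> r n; have [lt|le] := Rlt_or_le (nnv r) (nnv s); first by rewrite dimS_lt.
  case Eb: (before (nnv r) t).
    rewrite dimS_before //; case: eqP => // -> _.
    by rewrite sphere_gen_before // -(tr_dif HX) // Ha (tr0 HX) // eqSS gtn_eqF // scale0r.
  have [_ le0 _] := after_endpoint Hend Eb.
  by rewrite dimS_after // !sphere_gen_after // => e; apply: D1; rewrite dimDs_ge.
- move=> r r' n le'; have [lt|le] := Rlt_or_le (nnv r) (nnv s); first by rewrite dimS_lt.
  case Eb: (before (nnv r) t); last first.
    have Eb' := before_mono le' Eb; have [_ le0 _] := after_endpoint Hend Eb.
    by rewrite dimS_after // !sphere_gen_after // => e; apply: D2; rewrite ?dimDs_ge.
  rewrite dimS_before //; case: eqP => // -> _.
  rewrite sphere_gen_before // (tr_tr HX) //.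
  case Eb': (before (nnv r') t); first by rewrite sphere_gen_before //; lra.
  have [tN le0 lt0] := after_endpoint Hend Eb'.
  by rewrite sphere_gen_after // disk_gen_m1 // Hz // (tr_tr HX) //; lra.
Qed.

End Spheres.

Lemma sphere_genE (X : pcc) m s t t0 (g : family X) :
  is_pcc X -> is_endpoint s t t0 -> ltb_ext (nnv s) t ->
  elem_family (dimS m.+1 (nnv s) t) m.+1 g ->
  forall r n, g r n = sphere_gen t (g s m.+1) (g t0 m) r n.
Proof.
move=> HX Hend Hst [g0 gd gt] r n.
have [lt|le] := Rlt_or_le (nnv r) (nnv s); first by rewrite sphere_gen_lt // g0 // dimS_lt.
have bs := before_start Hst.
case Eb: (before (nnv r) t).
  have [->|nm] := eqVneq n m.+1.
    by rewrite sphere_gen_before // gt // dimS_before ?eqxx //; lra.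
  by rewrite sphere_gen_before_other // g0 // dimS_before // (negbTE nm).
have [tN le0 lt0] := after_endpoint Hend Eb.
have Eb0 := endpoint_after Hend tN.
rewrite (sphere_gen_after Hend) //; apply: (disk_gen_eq HX) => //.
- by rewrite gt // dimS_after ?dimD_m //; lra.
- by rewrite gd ?dimS_after ?dimD_m // ?eqxx ?scale1r //; lra.
- by move=> k km km1; rewrite g0 // dimS_after ?dimD_other //; lra.
Qed.

Section PointSphere.
Variables (X : pcc) (s : nnR).
Hypothesis HX : is_pcc X.

Definition sphere0_gen (a : obj X s 0) : family X := fun r n =>
  if Rlt_dec (nnv r) (nnv s) then 0 else castn n (tr r a).

Lemma sphere0_gen_0 a r : Rle (nnv s) (nnv r) -> sphere0_gen a r 0 = tr r a.
Proof. by move=> le; rewrite /sphere0_gen ifRlt_ge // castnn. Qed.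

Lemma sphere0_gen_family a : dif a = 0 -> elem_family (dimS 0 (nnv s) None) 0 (sphere0_gen a).
Proof.
move=> da; split.
- move=> r n; have [lt|le] := Rlt_or_le (nnv r) (nnv s); first by rewrite /sphere0_gen ifRlt_lt.
  by rewrite dimS_before //; case: n => // n _; rewrite /sphere0_gen ifRlt_ge // castn_neq.
- move=> r n; have [lt|le] := Rlt_or_le (nnv r) (nnv s); first by rewrite dimS_lt.
  rewrite dimS_before //; case: n => // _.
  by rewrite sphere0_gen_0 // -(tr_dif HX) // da (tr0 HX) // scale0r.
- move=> r r' n le'; have [lt|le] := Rlt_or_le (nnv r) (nnv s); first by rewrite dimS_lt.
  rewrite dimS_before //; case: n => // _.
  by rewrite !sphere0_gen_0 ?(tr_tr HX) //; lra.
Qed.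

End PointSphere.

(** * Lifting properties *)

Section Lifting.
Variables (X Y : pcc).
Unset Implicit Arguments.
Variable p : pchmap X Y.
Set Implicit Arguments.
Hypotheses (HX : is_pcc X) (HY : is_pcc Y) (Hp : is_pmap p).

Lemma RLP_onesP {dA dB kA kB} : dimle1 dA -> dimle1 dB ->
  RLP (@ones_map dA dB kA kB) p <->
  forall (gu : family X) (gv : family Y), elem_family dA kA gu -> elem_family dB kB gv ->
    (forall r n, dA (nnv r) n = 1%N -> p r n (gu r n) = gv r n) ->
    exists gh : family X, [/\ elem_family dB kB gh,
      forall r n, dA (nnv r) n = 1%N -> gh r n = gu r n
    & forall r n, p r n (gh r n) = gv r n].
Proof.
move=> hA hB; set i := @ones_map dA dB kA kB.
have i1 r n : dA (nnv r) n = 1%N -> i r n (const_mx 1) = const_mx 1.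
  by move=> e; rewrite /i ones_map1 e.
have i_lin r n : lin (i r n) by exact: ones_map_lin.
split.
- move=> HR gu gv Fu Fv Hc.
  have Hu := elem_map_pmap hA HX Fu; have Hv := elem_map_pmap hB HY Fv.
  case: (HR _ _ Hu Hv) => [|h [Hh hi ph]].
    apply: (elem_map_ext hA) => [r n|r n|r n e].
    + exact: lin_comp (pmap_lin Hu r n) (pmap_lin Hp r n).
    + exact: lin_comp (i_lin r n) (pmap_lin Hv r n).
    + by rewrite i1 // !elem_map1 e (elem_familyZ hB Fv) scale1r Hc.
  exists (elem_gen h); split.
  + exact: elem_gen_family.
  + by move=> r n e; rewrite /elem_gen -(i1 r n e) hi elem_map1 e scale1r.
  + by move=> r n; rewrite /elem_gen ph elem_map1 (elem_familyZ hB Fv).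
- move=> HR u v Hu Hv Hc.
  case: (HR _ _ (elem_gen_family hA Hu) (elem_gen_family hB Hv)) => [|gh [Fh hu hv]].
    by move=> r n e; rewrite /elem_gen Hc i1.
  exists (elem_map dB kB gh); split.
  + exact: elem_map_pmap.
  + apply: (elem_map_ext hA) => [r n|r n|r n e].
    * exact: lin_comp (i_lin r n) (pmap_lin (elem_map_pmap hB HX Fh) r n).
    * exact: pmap_lin Hu r n.
    * by rewrite i1 // elem_map1 (elem_familyZ hB Fh) hu.
  + apply: (elem_map_ext hB) => [r n|r n|r n _].
    * exact: lin_comp (pmap_lin (elem_map_pmap hB HX Fh) r n) (pmap_lin Hp r n).
    * exact: pmap_lin Hv r n.
    * by rewrite elem_map1 (elem_familyZ hB Fh) hv.
Qed.

Lemma RLP_ones_trivial dA dB kA kB : (forall r n, dA r n = 0%N) -> (forall r n, dB r n = 0%N) ->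
  RLP (@ones_map dA dB kA kB) p.
Proof.
move=> hA hB; have lA : dimle1 dA by move=> r n; rewrite hA.
have lB : dimle1 dB by move=> r n; rewrite hB.
apply/(RLP_onesP lA lB) => gu gv _ [gv0 _ _] _; exists (fun _ _ => 0); split.
- exact: elem_family0.
- by move=> r n; rewrite hA.
- by move=> r n; rewrite (pmap0 Hp) gv0.
Qed.

Lemma pmap_disk_gen m (s : nnR) (x : obj X s m) r n :
  p r n (disk_gen x r n) = disk_gen (p s m x) r n.
Proof.
have [lt|le] := Rlt_or_le (nnv r) (nnv s); first by rewrite !disk_gen_lt ?(pmap0 Hp).
apply: (disk_gen_eq HY (g := fun r n => p r n (disk_gen x r n))) => //.
- by rewrite disk_gen_m // (pmap_tr Hp).
- by rewrite disk_gen_m1 // disk_gen_m // (tr_dif HX) // (pmap_dif Hp).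
- by move=> k km km1; rewrite disk_gen_other ?(pmap0 Hp).
Qed.

Lemma RLP_Jmap0P m (s : nnR) :
  RLP (Jmap0 m.+1 (nnv s)) p <-> forall y : obj Y s m, exists x, p s m x = y.
Proof.
have ss := Rle_refl (nnv s).
rewrite /Jmap0 (RLP_onesP (fun _ _ => leq0n 1) (@dimDs_le1 _ _)).
split=> [HR y | Hs gu gv _ Fv _].
- have [//|gh [_ _ ph]] := HR _ _ (elem_family0 _ _ (fun _ _ => erefl)) (disk_gen_family HY y).
  by exists (gh s m); rewrite ph disk_gen_m // (tr_id HY).
- have [x px] := Hs (gv s m); exists (disk_gen x); split => //.
  + exact: disk_gen_family.
  + by move=> r n; rewrite pmap_disk_gen px -(disk_genE HY Fv).
Qed.

Lemma RLP_JmapP m (s t : nnR) : Rlt (nnv s) (nnv t) ->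
  RLP (Jmap m.+1 (nnv s) (nnv t)) p <->
  forall (x : obj X t m) (y : obj Y s m), p t m x = tr t y ->
    exists x' : obj X s m, tr t x' = x /\ p s m x' = y.
Proof.
move=> st; have ss := Rle_refl (nnv s); have tt := Rle_refl (nnv t).
rewrite /Jmap (RLP_onesP (@dimDs_le1 _ _) (@dimDs_le1 _ _)).
split=> [HR x y pxy | Hl gu gv Fu Fv pc].
- have [|gh [[_ _ gt] hu ph]] := HR _ _ (disk_gen_family HX x) (disk_gen_family HY y).
    move=> r n /dimDs1P [le _].
    by rewrite pmap_disk_gen pxy (disk_gen_tr HY) //; lra.
  exists (gh s m); split; last by rewrite ph disk_gen_m // (tr_id HY).
  by rewrite gt ?hu ?disk_gen_m ?(tr_id HX) ?dimDs_m //; lra.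
- have [|x' [tx' px']] := Hl (gu t m) (gv s m).
    by have [_ _ gt] := Fv; rewrite pc ?gt ?dimDs_m //; lra.
  exists (disk_gen x'); split.
  + exact: disk_gen_family.
  + move=> r n /dimDs1P [le _].
    by rewrite (disk_genE HX Fu) -tx' (disk_gen_tr HX) //; lra.
  + by move=> r n; rewrite pmap_disk_gen px' -(disk_genE HY Fv).
Qed.

Definition cocycle_lifting m (s : nnR) (t : option R) (t0 : nnR) :=
  forall (a : obj X s m.+1) (z : obj X t0 m) (b : obj Y s m),
    dif a = 0 -> p s m.+1 a = dif b ->
    (t <> None -> dif z = tr t0 a /\ p t0 m z = tr t0 b) ->
    exists w : obj X s m, [/\ dif w = a, p s m w = b & (t <> None -> tr t0 w = z)].

Section SphereLifting.
Variables (m : nat) (s : nnR) (t : option R) (t0 : nnR).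
Hypotheses (Hend : is_endpoint s t t0) (Hst : ltb_ext (nnv s) t).

Let after_t0 : t <> None -> [/\ before (nnv t0) t = false, Rle (nnv t0) (nnv t0)
  & Rlt (nnv s) (nnv t0)].
Proof.
move=> tN; have Eb0 := endpoint_after Hend tN.
by have [_ _ lt0] := after_endpoint Hend Eb0; split => //; apply: Rle_refl.
Qed.

Lemma RLP_Imap_lifting : RLP (Imap m.+1 (nnv s) t) p -> cocycle_lifting m s t t0.
Proof.
have ss := Rle_refl (nnv s); have bs := before_start Hst.
rewrite /Imap (RLP_onesP (@dimS_le1 _ _ _) (@dimDs_le1 _ _)) => HR a z b da pab Hz.
have dz : t <> None -> dif z = tr t0 a by move=> /Hz [].
have [|gh [[_ gd gt] hu ph]] := HR _ _ (sphere_gen_family HX Hend da dz) (disk_gen_family HY b).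
  move=> r n; have [lt|le] := Rlt_or_le (nnv r) (nnv s); first by rewrite dimS_lt.
  case Eb: (before (nnv r) t).
    rewrite dimS_before //; case: eqP => // -> _.
    by rewrite sphere_gen_before // (pmap_tr Hp) // pab disk_gen_m1.
  have [tN le0 lt0] := after_endpoint Hend Eb; have [_ pz] := Hz tN.
  by rewrite (sphere_gen_after Hend) // pmap_disk_gen pz (disk_gen_tr HY) //; lra.
exists (gh s m); split.
- by rewrite gd ?dimDs_m // eqxx scale1r hu ?dimS_before ?eqxx // sphere_gen_before // (tr_id HX).
- by rewrite ph disk_gen_m // (tr_id HY).
- move=> /after_t0 [Eb0 tt lt0].
  rewrite gt ?dimDs_m ?hu ?dimS_after ?dimD_m //; try lra.
  by rewrite (sphere_gen_after Hend) // disk_gen_m // (tr_id HX).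
Qed.

Lemma lifting_RLP_Imap : cocycle_lifting m s t t0 -> RLP (Imap m.+1 (nnv s) t) p.
Proof.
have ss := Rle_refl (nnv s); have bs := before_start Hst.
rewrite /Imap (RLP_onesP (@dimS_le1 _ _ _) (@dimDs_le1 _ _)) => Hl gu gv Fu Fv pc.
have Sm1 : dimS m.+1 (nnv s) t (nnv s) m.+1 = 1%N by rewrite dimS_before ?eqxx.
have [_ gud gut] := Fu; have [_ gvd gvt] := Fv.
have [|||w [dw pw tw]] := Hl (gu s m.+1) (gu t0 m) (gv s m).
- by rewrite gud // eqSS gtn_eqF // scale0r.
- by rewrite pc // gvd ?dimDs_m // eqxx scale1r.
- move=> /after_t0 [Eb0 tt lt0].
  have St0 : dimS m.+1 (nnv s) t (nnv t0) m = 1%N by rewrite dimS_after ?dimD_m //; lra.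
  split; first by rewrite gud // eqxx scale1r gut //; lra.
  by rewrite pc // gvt ?dimDs_m //; lra.
exists (disk_gen w); split.
- exact: disk_gen_family.
- move=> r n e; rewrite (sphere_genE HX Hend Hst Fu).
  have [lt|le] := Rlt_or_le (nnv r) (nnv s); first by rewrite dimS_lt in e.
  case Eb: (before (nnv r) t).
    rewrite dimS_before // in e; case: eqP e => // -> _.
    by rewrite sphere_gen_before // disk_gen_m1 // dw.
  have [tN le0 lt0] := after_endpoint Hend Eb.
  by rewrite (sphere_gen_after Hend) // -(tw tN) (disk_gen_tr HX) //; lra.
- by move=> r n; rewrite pmap_disk_gen pw -(disk_genE HY Fv).
Qed.

End SphereLifting.

Lemma RLP_Imap0_kernel (s : nnR) : RLP (Imap 0 (nnv s) None) p ->
  forall a : obj X s 0, dif a = 0 -> p s 0 a = 0 -> a = 0.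
Proof.
have ss := Rle_refl (nnv s).
rewrite /Imap (RLP_onesP (@dimS_le1 _ _ _) (@dimDs_le1 _ _)) => HR a da pa.
have [|gh [[gh0 _ _] hu _]] :=
  HR _ _ (sphere0_gen_family HX da) (elem_family0 _ _ (@dimDs0 (nnv s))).
  move=> r n; have [lt|le] := Rlt_or_le (nnv r) (nnv s); first by rewrite dimS_lt.
  rewrite dimS_before //; case: n => // _.
  by rewrite sphere0_gen_0 // (pmap_tr Hp) // pa (tr0 HY).
by rewrite -(tr_id HX a) -sphere0_gen_0 // -hu ?gh0 ?dimDs0 ?dimS_before.
Qed.

Lemma kernel_RLP_Imap0 (s : nnR) t : ltb_ext (nnv s) t ->
  (forall a : obj X s 0, dif a = 0 -> p s 0 a = 0 -> a = 0) -> RLP (Imap 0 (nnv s) t) p.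
Proof.
move=> Hst Hk; have bs := before_start Hst; have ss := Rle_refl (nnv s).
rewrite /Imap (RLP_onesP (@dimS_le1 _ _ _) (@dimDs_le1 _ _)).
move=> gu gv [_ gd gt] [gv0 _ _] pc.
have gu_s : gu s 0%N = 0.
  apply: Hk; first by rewrite gd ?dimS_before // scale0r.
  by rewrite pc ?dimS_before // gv0 // dimDs0.
exists (fun _ _ => 0); split.
- exact: elem_family0 (@dimDs0 _).
- move=> r n e; have [lt|le] := Rlt_or_le (nnv r) (nnv s); first by rewrite dimS_lt in e.
  case Eb: (before (nnv r) t); last by rewrite dimS_after in e.
  rewrite dimS_before // in e; case: n e => // _.
  by rewrite -(gt s) ?dimS_before // gu_s (tr0 HX).
- by move=> r n; rewrite (pmap0 Hp) gv0 // dimDs0.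
Qed.

Section FromRLP_I.
Unset Implicit Arguments.
Hypothesis HI : RLP_I p.
Set Implicit Arguments.

Lemma RLP_I_lift (s : nnR) m (a : obj X s m.+1) (b : obj Y s m) :
  dif a = 0 -> p s m.+1 a = dif b -> exists2 w, dif w = a & p s m w = b.
Proof.
move=> da pab.
have lift := RLP_Imap_lifting (endpoint_None s s) I (HI m.+1 (nnv s) None (nnv_ge0 s) I).
have [//|w [dw pw _]] := lift a 0 b da pab.
by exists w.
Qed.

Lemma RLP_I_rel_lift (s t : nnR) m (a : obj X s m.+1) (z : obj X t m) (b : obj Y s m) :
  Rlt (nnv s) (nnv t) -> dif a = 0 -> p s m.+1 a = dif b ->
  dif z = tr t a -> p t m z = tr t b ->
  exists w : obj X s m, [/\ dif w = a, p s m w = b & tr t w = z].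
Proof.
move=> st da pab dz pz.
have lift := RLP_Imap_lifting (endpoint_Some st) st (HI m.+1 (nnv s) (Some (nnv t)) (nnv_ge0 s) st).
have [w [dw pw tw]] := lift a z b da pab (fun _ => conj dz pz).
by exists w; split => //; apply: tw.
Qed.

Lemma RLP_I_surj (s : nnR) m (y : obj Y s m) : exists x, p s m x = y.
Proof.
(* Lift the cocycle [0] over [dif y], then the resulting cocycle over [y]. *)
have p0 : p s m.+2 0 = dif (dif y) by rewrite (pmap0 Hp) (dif_dif HY).
have [w dw pw] := RLP_I_lift (dif0 HX) p0.
by have [x _ px] := RLP_I_lift dw pw; exists x.
Qed.

Lemma RLP_I_rel_surj (s t : nnR) m : Rlt (nnv s) (nnv t) ->
  forall (x : obj X t m) (y : obj Y s m), p t m x = tr t y ->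
    exists x' : obj X s m, tr t x' = x /\ p s m x' = y.
Proof.
move=> st x y pxy; have le : Rle (nnv s) (nnv t) by lra.
have p0 : p s m.+2 0 = dif (dif y) by rewrite (pmap0 Hp) (dif_dif HY).
have ddx : dif (dif x) = tr t (0 : obj X s m.+2) by rewrite (dif_dif HX) (tr0 HX).
have pdx : p t m.+1 (dif x) = tr t (dif y) by rewrite (pmap_dif Hp) pxy (tr_dif HY).
have [w [dw pw tw]] := RLP_I_rel_lift st (dif0 HX) p0 ddx pdx.
by have [x' [_ px' tx']] := RLP_I_rel_lift st dw pw (esym tw) pxy; exists x'.
Qed.

Lemma RLP_I_inW : inW p.
Proof.
move=> r n; split.
- case: n => [|m] x dx /=.
    exact: RLP_Imap0_kernel (HI 0%N (nnv r) None (nnv_ge0 r) I) x dx.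
  by move=> [y py]; have [w dw _] := RLP_I_lift dx (esym py); exists w.
- move=> y dy; have p0 : p r n.+1 0 = dif y by rewrite (pmap0 Hp).
  have [w dw pw] := RLP_I_lift (dif0 HX) p0.
  by exists w; split => //; rewrite pw subrr; apply: (cobd0 HY).
Qed.

Lemma RLP_I_RLP_J : RLP_J p.
Proof.
split.
- move=> [|m] s t s0 st; first by apply: RLP_ones_trivial => r n; apply: dimDs0.
  have t0 : Rle 0 t by lra.
  apply/(RLP_JmapP m (s := exist _ s s0) (t := exist _ t t0) st).
  exact: RLP_I_rel_surj.
- move=> [|m] s s0; first by apply: RLP_ones_trivial => r n; rewrite ?dimDs0.
  apply/(RLP_Jmap0P m (exist _ s s0)).
  exact: RLP_I_surj.
Qed.

End FromRLP_I.

Section FromRLP_J.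
Unset Implicit Arguments.
Hypotheses (HJ : RLP_J p) (HW : inW p).
Set Implicit Arguments.

Lemma RLP_J_surj (r : nnR) n (y : obj Y r n) : exists x, p r n x = y.
Proof. exact: (RLP_Jmap0P n r).1 (HJ.2 n.+1 (nnv r) (nnv_ge0 r)) y. Qed.

Lemma RLP_J_rel_surj (s t : nnR) m : Rlt (nnv s) (nnv t) ->
  forall (x : obj X t m) (y : obj Y s m), p t m x = tr t y ->
    exists x' : obj X s m, tr t x' = x /\ p s m x' = y.
Proof. by move=> st; apply: (RLP_JmapP m st).1 (HJ.1 m.+1 (nnv s) (nnv t) (nnv_ge0 s) st). Qed.

Lemma cobd_lift r n (y : obj Y r n) : cobd y -> exists2 x : obj X r n, cobd x & p r n x = y.
Proof.
case: n y => [|n] y /=; first by move=> ->; exists 0; rewrite ?(pmap0 Hp).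
move=> [y' <-]; have [x px] := RLP_J_surj y'.
by exists (dif x); [exists x | rewrite (pmap_dif Hp) px].
Qed.

Lemma kernel_acyclic0 r (g : obj X r 0) : dif g = 0 -> p r 0 g = 0 -> g = 0.
Proof. exact: (HW r 0%N).1 g. Qed.

Lemma kernel_acyclic r n (g : obj X r n.+1) : dif g = 0 -> p r n.+1 g = 0 ->
  exists f : obj X r n, dif f = g /\ p r n f = 0.
Proof.
(* [f0] bounds [g]; correcting it by a cocycle [c] with [p c] cohomologous to
   [p f0], and then by a coboundary lifting [p (f0 - c)], lands in [ker p]. *)
move=> dg pg.
have cobd_pg : cobd (p r n.+1 g) by exists 0; rewrite pg (dif0 HY).
have [f0 df0] := (HW r n.+1).1 g dg cobd_pg.
have dpf0 : dif (p r n f0) = 0 by rewrite -(pmap_dif Hp) df0 pg.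
have [c [dc cobd_pc]] := (HW r n).2 (p r n f0) dpf0.
have [x cobd_x px] := cobd_lift cobd_pc.
exists (f0 - c - x); split.
- by rewrite !(difB HX) df0 dc (cobd_cocycle HX cobd_x) !subr0.
- by rewrite !(pmapB Hp) px subrr.
Qed.

Lemma kernel_cocycle_tr (s t : nnR) n (e : obj X t n) : Rlt (nnv s) (nnv t) ->
  dif e = 0 -> p t n e = 0 -> exists f : obj X s n, [/\ dif f = 0, p s n f = 0 & tr t f = e].
Proof.
move=> st; have le : Rle (nnv s) (nnv t) by lra.
case: n e => [|n] e de pe.
  by exists 0; rewrite (dif0 HX) (pmap0 Hp) (tr0 HX) // (kernel_acyclic0 de pe).
have [e0 [de0 pe0]] := kernel_acyclic de pe.
have pe0' : p t n e0 = tr t (0 : obj Y s n) by rewrite pe0 (tr0 HY).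
have [e' [te' pe']] := RLP_J_rel_surj st pe0'.
by exists (dif e'); rewrite (dif_dif HX) (pmap_dif Hp) pe' (dif0 HY) (tr_dif HX) // te' de0.
Qed.

Lemma kernel_rel_acyclic (s t : nnR) n (g : obj X s n.+1) : Rlt (nnv s) (nnv t) ->
  dif g = 0 -> p s n.+1 g = 0 -> tr t g = 0 ->
  exists f : obj X s n, [/\ dif f = g, p s n f = 0 & tr t f = 0].
Proof.
move=> st dg pg tg; have le : Rle (nnv s) (nnv t) by lra.
have [f1 [df1 pf1]] := kernel_acyclic dg pg.
have [||f2 [df2 pf2 tf2]] := kernel_cocycle_tr (e := tr t f1) st.
- by rewrite -(tr_dif HX) // df1.
- by rewrite (pmap_tr Hp) // pf1 (tr0 HY).
exists (f1 - f2); split.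
- by rewrite (difB HX) df1 df2 subr0.
- by rewrite (pmapB Hp) pf1 pf2 subr0.
- by rewrite (trB HX) // tf2 subrr.
Qed.

Lemma RLP_J_W_Imap_unbounded m (s : nnR) : RLP (Imap m.+1 (nnv s) None) p.
Proof.
apply: (lifting_RLP_Imap (m := m) (endpoint_None s s) I) => a z b da pab _.
have [w' pw'] := RLP_J_surj b.
have dg : dif (dif w' - a) = 0 by rewrite (difB HX) (dif_dif HX) da subrr.
have pg : p s m.+1 (dif w' - a) = 0 by rewrite (pmapB Hp) (pmap_dif Hp) pw' pab subrr.
have [f [df pf]] := kernel_acyclic dg pg.
exists (w' - f); split => //.
- by rewrite (difB HX) df opprB addrC subrK.
- by rewrite (pmapB Hp) pw' pf subr0.
Qed.

Lemma RLP_J_W_Imap_bounded m (s t : nnR) : Rlt (nnv s) (nnv t) ->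
  RLP (Imap m.+1 (nnv s) (Some (nnv t))) p.
Proof.
move=> st; have le : Rle (nnv s) (nnv t) by lra.
apply: (lifting_RLP_Imap (m := m) (endpoint_Some st) st) => a z b da pab /(_ ltac:(by [])) [dz pz].
have [w' [tw' pw']] := RLP_J_rel_surj st pz.
have dg : dif (dif w' - a) = 0 by rewrite (difB HX) (dif_dif HX) da subrr.
have pg : p s m.+1 (dif w' - a) = 0 by rewrite (pmapB Hp) (pmap_dif Hp) pw' pab subrr.
have tg : tr t (dif w' - a) = 0 by rewrite (trB HX) // (tr_dif HX) // tw' dz subrr.
have [f [df pf tf]] := kernel_rel_acyclic st dg pg tg.
exists (w' - f); split.
- by rewrite (difB HX) df opprB addrC subrK.
- by rewrite (pmapB Hp) pw' pf subr0.
- by move=> _; rewrite (trB HX) // tw' tf subr0.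
Qed.

Lemma RLP_J_W_RLP_I : RLP_I p.
Proof.
move=> [|m] s t s0 st; pose s' : nnR := exist _ s s0.
  by apply: (kernel_RLP_Imap0 (s := s') st) => a; apply: kernel_acyclic0.
case: t st => [t|] st; last exact: (RLP_J_W_Imap_unbounded (m := m) (s := s')).
have t0 : Rle 0 t by rewrite /= in st; lra.
exact: (RLP_J_W_Imap_bounded (m := m) (s := s') (t := exist _ t t0) st).
Qed.

End FromRLP_J.

End Lifting.

Theorem mainTheorem12 (X Y : pcc) (p : pchmap X Y) :
  is_pcc X -> is_pcc Y -> is_pmap p ->
  (RLP_I p <-> RLP_J p /\ inW p).
Proof.
move=> HX HY Hp; split.
- by move=> HI; split; [apply: RLP_I_RLP_J | apply: RLP_I_inW].
- by case=> HJ HW; apply: RLP_J_W_RLP_I.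
Qed.
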